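(* Let $\mathcal{D}',\mathcal{D}''$ be two inputs of $\mathsf{SGDsub}$ that differ only in the user $Z_{1,1}$ (replaced by $Z'_{1,1}$), both run from the same initial point $x_0$ with the same parameters and with threshold parameter $\varsigma\ge0$ in $\mathsf{RobustEst}$; let $x_1$ and $y_1$ be the respective first iterates. If for some $\rho>0$ the pair $(\mathcal{D}',\mathcal{D}'')$ is $\rho$-aligned, then $\|x_1-y_1\|_\infty\le\eta(4\rho+2\varsigma)$.
   Context: $\mathcal{X}\subset\mathbb{R}^d$ is an $\ell_\infty$-ball, $\Pi_{\mathcal{X}}$ Euclidean projection onto it; $f(\cdot;z)$ are differentiable losses; each user is a set of $m$ data points. Robust statistic: a coordinatewise map $(X_1,\dots,X_B)\mapsto X_{\mathrm{rs}}\in\mathbb{R}^d$ such that (i) for any $\rho\ge0$, if more than $B/2$ of the $X_i$ lie in $B_\infty(X',\rho)$ then $X_{\mathrm{rs}}\in B_\infty(X',\rho)$; (ii) if $\|Y_i-X_i\|_\infty\le\Delta$ for all $i$ then $\|X_{\mathrm{rs}}-Y_{\mathrm{rs}}\|_\infty\le\Delta$; (iii) $(aX_i+b)_{\mathrm{rs}}=aX_{\mathrm{rs}}+b$. $\mathsf{RobustEst}(X_1,\dots,X_B;\varsigma)$: for each coordinate $j$ with $\bar x[j]=\frac1B\sum_iX_i[j]$, output the projection of $\bar x[j]$ onto $[X_{\mathrm{rs}}[j]-\varsigma,X_{\mathrm{rs}}[j]+\varsigma]$ if $|X_{\mathrm{rs}}[j]-\bar x[j]|\ge\varsigma$, else $\bar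 x[j]$. $\mathsf{SGDsub}$ with step size $\eta$: users split into groups $\{Z_{i,t}\}_{t\in[T]}$, $i\in[B]$; at step $t$, $q_t(Z_{i,t})=\frac1m\sum_{z\in Z_{i,t}}\nabla f(x_{t-1};z)$, $g_{t-1}=\mathsf{RobustEst}(q_t(Z_{1,t}),\dots,q_t(Z_{B,t});\varsigma)$, $x_t=\Pi_{\mathcal{X}}(x_{t-1}-\eta g_{t-1})$; write $q'_t$, $y_t$ for the analogous quantities on $\mathcal{D}''$. The pair is $\rho$-aligned if there are points $X',Y'$ with $|\{i\in[B]:q_1(Z_{i,1})\in B_\infty(X',\rho)\}|\ge 2B/3$ and $|\{i\in[B]:q'_1(Z'_{i,1})\in B_\infty(Y',\rho)\}|\ge2B/3$ (where $Z'_{i,1}=Z_{i,1}$ for $i\neq1$).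
   Formalization: The number B of groups into which SGDsub splits the users is at least 4. The statement above fails without it. *)

From HB Require Import structures.
From mathcomp Require Import all_boot all_order all_algebra.
Set Implicit Arguments. Unset Strict Implicit. Unset Printing Implicit Defensive.
Import Order.TTheory GRing.Theory Num.Theory.
Local Open Scope ring_scope.

Section Defs.
Variable R : realFieldType.

Definition linf {d : nat} (v : 'rV[R]_d) : R := \big[Num.max/0]_(j < d) `|v 0 j|.

Definition in_ballinf {d : nat} (c : 'rV[R]_d) (r : R) (x : 'rV[R]_d) : bool :=
  linf (x - c) <= r.

Definition sqdist {d : nat} (x y : 'rV[R]_d) : R := \sum_(j < d) (x 0 j - y 0 j) ^+ 2.

Definition is_eucl_proj_ballinf {d : nat} (c : 'rV[R]_d) (r : R)
    (Pi : 'rV[R]_d -> 'rV[R]_d) : Prop :=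
  forall x, in_ballinf c r (Pi x) /\
            (forall y, in_ballinf c r y -> sqdist x (Pi x) <= sqdist x y).

Definition robust_statistic {d B : nat}
    (rs : ('I_B -> 'rV[R]_d) -> 'rV[R]_d) : Prop :=
  [/\ (forall (X Y : 'I_B -> 'rV[R]_d) (j : 'I_d), (forall i, X i 0 j = Y i 0 j) -> rs X 0 j = rs Y 0 j),
      (forall (rho : R) (X : 'I_B -> 'rV[R]_d) (X' : 'rV[R]_d), 0 <= rho ->
         (B < 2 * #|[set i | in_ballinf X' rho (X i)]|)%N ->
         in_ballinf X' rho (rs X)),
      (forall (Delta : R) (X Y : 'I_B -> 'rV[R]_d),
         (forall i, linf (Y i - X i) <= Delta) -> linf (rs X - rs Y) <= Delta)
  &
      (forall (a : R) (b : 'rV[R]_d) (X : 'I_B -> 'rV[R]_d),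
         rs (fun i => a *: X i + b) = a *: rs X + b)].

Definition clamp (lo hi v : R) : R := Num.max lo (Num.min v hi).

Definition RobustEst {d B : nat} (rs : ('I_B -> 'rV[R]_d) -> 'rV[R]_d)
    (X : 'I_B -> 'rV[R]_d) (vs : R) : 'rV[R]_d :=
  \row_(j < d)
    let xbar := B%:R^-1 * \sum_(i < B) X i 0 j in
    let xrs := rs X 0 j in
    if vs <= `|xrs - xbar| then clamp (xrs - vs) (xrs + vs) xbar else xbar.

Definition qgrad {Zt : Type} {d m : nat} (grad : 'rV[R]_d -> Zt -> 'rV[R]_d)
    (x : 'rV[R]_d) (Z : 'I_m -> Zt) : 'rV[R]_d :=
  m%:R^-1 *: \sum_(k < m) grad x (Z k).

Definition SGDsub_step {Zt : Type} {d m B : nat}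
    (grad : 'rV[R]_d -> Zt -> 'rV[R]_d) (Pi : 'rV[R]_d -> 'rV[R]_d)
    (rs : ('I_B -> 'rV[R]_d) -> 'rV[R]_d) (eta vs : R)
    (users_t : 'I_B -> 'I_m -> Zt) (x : 'rV[R]_d) : 'rV[R]_d :=
  Pi (x - eta *: RobustEst rs (fun i => qgrad grad x (users_t i)) vs).

Definition rho_aligned {d B : nat} (rho : R) (q1 q1' : 'I_B -> 'rV[R]_d) : Prop :=
  exists X' Y' : 'rV[R]_d,
    (2 * B <= 3 * #|[set i | in_ballinf X' rho (q1 i)]|)%N /\
    (2 * B <= 3 * #|[set i | in_ballinf Y' rho (q1' i)]|)%N.

End Defs.

(** The gradients seen by the two runs differ in one user only. Alignment puts
    at least [2B/3] of the [B] group gradients of each run in a [rho]-ball, so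
    (as [B > 3]) some unchanged user lies in both balls: the centres are
    [2 rho] apart. Both balls hold a strict majority, hence contain the two
    robust statistics, which are then [4 rho] apart; [RobustEst] stays within
    [varsigma] of the robust statistic, and the Euclidean projection onto an
    [l_oo]-ball is a coordinatewise clamp, hence [l_oo]-nonexpansive. *)
From HB Require Import structures.
From mathcomp Require Import all_boot all_order all_algebra.
From mathcomp Require Import ring lra zify.
Set Implicit Arguments. Unset Strict Implicit. Unset Printing Implicit Defensive.
Import Order.TTheory GRing.Theory Num.Theory.
Local Open Scope ring_scope.

Lemma setI_witness_neq (T : finType) (S1 S2 : {set T}) (i0 : T) :
  (3 < #|T|)%N -> (2 * #|T| <= 3 * #|S1|)%N -> (2 * #|T| <= 3 * #|S2|)%N ->
  exists2 i, i != i0 & i \in S1 :&: S2.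
Proof.
move=> hT h1 h2; have [S12_0 | [i]] := set_0Vmem ((S1 :&: S2) :\ i0).
  have hD1 := cardsD1 i0 (S1 :&: S2); rewrite S12_0 cards0 in hD1.
  have hUI := cardsUI S1 S2.
  have hU : (#|S1 :|: S2| <= #|T|)%N := max_card _.
  have hi0 : ((i0 \in S1 :&: S2) <= 1)%N by case: (_ \in _).
  lia.
by rewrite in_setD1 => /andP[hi hS]; exists i.
Qed.

Section LinfDistance.
Variables (R : realFieldType) (d : nat).
Implicit Types (u v w : 'rV[R]_d) (a b : R).

Lemma linf_distP u v a :
  reflect (0 <= a /\ forall j, `|u 0 j - v 0 j| <= a) (linf (u - v) <= a).
Proof.
rewrite /linf; apply: (iffP (bigmax_leP _ _ _ _)) => -[a_ge0 hle]; split=> // j.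
  by have := hle j isT; rewrite !mxE.
by rewrite !mxE.
Qed.

Lemma linf_distC u v : linf (u - v) = linf (v - u).
Proof. by apply: eq_bigr => j _; rewrite !mxE distrC. Qed.

Lemma linf_dist_triangle u v w a b :
  linf (u - v) <= a -> linf (v - w) <= b -> linf (u - w) <= a + b.
Proof.
move=> /linf_distP[a_ge0 huv] /linf_distP[b_ge0 hvw].
apply/linf_distP; split=> [|j]; first exact: addr_ge0.
by rewrite -[u 0 j](subrK (v 0 j)) -addrA (le_trans (ler_normD _ _)) ?lerD.
Qed.

Lemma linf_dist_gradient_step x u v eta a : 0 <= eta ->
  linf (u - v) <= a -> linf ((x - eta *: u) - (x - eta *: v)) <= eta * a.
Proof.
move=> eta_ge0 /linf_distP[a_ge0 huv]; apply/linf_distP.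
split=> [|j]; first exact: mulr_ge0.
have -> : (x - eta *: u) 0 j - (x - eta *: v) 0 j = eta * (v 0 j - u 0 j).
  by rewrite !mxE; ring.
by rewrite normrM ger0_norm // distrC ler_wpM2l.
Qed.

End LinfDistance.

Section Clamp.
Variable R : realFieldType.
Implicit Types (lo hi a b p : R).

Lemma clamp_lipschitz lo hi a b : `|clamp lo hi a - clamp lo hi b| <= `|a - b|.
Proof.
have := ler_norm (a - b); have := ler_norm (b - a); rewrite [`|b - a|]distrC.
rewrite /clamp /Num.max /Num.min ler_norml.
case: (ltP a hi); case: (ltP b hi) => /= *;
  case: (ltP lo a); case: (ltP lo b); case: (ltP lo hi) => /= *;
  apply/andP; split; lra.
Qed.

Lemma clamp_in lo hi a : lo <= hi -> lo <= clamp lo hi a <= hi.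
Proof.
rewrite /clamp /Num.max /Num.min => lo_hi.
by case: (ltP a hi) => /= *; case: (ltP lo _) => *; apply/andP; split; lra.
Qed.

(* Obtuse-angle inequality: yields both minimality and uniqueness of the clamp. *)
Lemma clamp_sqr_gap lo hi a p : lo <= p <= hi ->
  (p - clamp lo hi a) ^+ 2 + (a - clamp lo hi a) ^+ 2 <= (a - p) ^+ 2.
Proof.
rewrite /clamp /Num.max /Num.min => /andP[lo_p p_hi].
by case: (ltP a hi) => /= *; case: (ltP lo _) => *; nra.
Qed.

End Clamp.

Section ProjectionOntoBall.
Variables (R : realFieldType) (d : nat) (c : 'rV[R]_d) (r : R).
Variable Pi : 'rV[R]_d -> 'rV[R]_d.
Hypothesis hPi : is_eucl_proj_ballinf c r Pi.

Let in_box (y : 'rV[R]_d) j : in_ballinf c r y -> c 0 j - r <= y 0 j <= c 0 j + r.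
Proof.
by move=> /linf_distP[_ /(_ j)]; rewrite ler_norml => /andP[*]; apply/andP; split; lra.
Qed.

Lemma proj_ballinf_clamp x : Pi x = \row_j clamp (c 0 j - r) (c 0 j + r) (x 0 j).
Proof.
set y := \row_j _; have [Pix_in Pix_min] := hPi x.
have r_ge0 : 0 <= r by have /linf_distP[] := Pix_in.
have y_in : in_ballinf c r y.
  apply/linf_distP; split=> // j; rewrite mxE ler_norml.
  by have /andP[*] := @clamp_in _ (c 0 j - r) (c 0 j + r) (x 0 j) ltac:(lra);
    apply/andP; split; lra.
have gap : \sum_(j < d) (Pi x 0 j - y 0 j) ^+ 2 <= sqdist x (Pi x) - sqdist x y.
  rewrite /sqdist -sumrB; apply: ler_sum => j _; rewrite mxE lerBrDr.
  exact: clamp_sqr_gap (in_box j Pix_in).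
have sum0 : \sum_(j < d) (Pi x 0 j - y 0 j) ^+ 2 = 0.
  apply/eqP; rewrite eq_le sumr_ge0 ?andbT => [|j _]; last exact: sqr_ge0.
  by rewrite (le_trans gap) // subr_le0 Pix_min.
apply/rowP => j; apply/eqP; rewrite -subr_eq0 -sqrf_eq0.
by rewrite (psumr_eq0P (fun k _ => sqr_ge0 _) sum0).
Qed.

Lemma proj_ballinf_nonexpansive x x' a :
  linf (x - x') <= a -> linf (Pi x - Pi x') <= a.
Proof.
move=> /linf_distP[a_ge0 hxx']; apply/linf_distP; split=> // j.
by rewrite !proj_ballinf_clamp !mxE (le_trans (clamp_lipschitz _ _ _ _)).
Qed.

End ProjectionOntoBall.

Section RobustStatistic.
Variables (R : realFieldType) (d B : nat).
Variable rs : ('I_B -> 'rV[R]_d) -> 'rV[R]_d.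

Lemma RobustEst_near_rs X vs : 0 <= vs -> linf (RobustEst rs X vs - rs X) <= vs.
Proof.
move=> vs_ge0; apply/linf_distP; split=> // j; rewrite mxE /=.
set xbar := _ * _; set xrs := rs X 0 j.
case: ifP => [_ | /negbT]; last by rewrite -ltNge distrC => /ltW.
have /andP[*] := @clamp_in _ (xrs - vs) (xrs + vs) xbar ltac:(lra).
by rewrite ler_norml; apply/andP; split; lra.
Qed.

Hypothesis hrs : robust_statistic rs.

Lemma rs_in_aligned_ball rho X X' : 0 <= rho -> (0 < B)%N ->
  (2 * B <= 3 * #|[set i | in_ballinf X' rho (X i)]|)%N ->
  in_ballinf X' rho (rs X).
Proof. by case: hrs => _ majority _ _ rho_ge0 B_gt0 hX; apply: majority => //; lia. Qed.

End RobustStatistic.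

Theorem lemma3p6 (R : realFieldType) (Zt : Type) (d m B T : nat)
  (hB : (3 < B)%N) (i1 : 'I_B) (t1 : 'I_T) (ht1 : nat_of_ord t1 = 0%N)
  (c : 'rV[R]_d) (r : R) (Pi : 'rV[R]_d -> 'rV[R]_d)
  (hPi : is_eucl_proj_ballinf c r Pi)
  (grad : 'rV[R]_d -> Zt -> 'rV[R]_d)
  (rs : ('I_B -> 'rV[R]_d) -> 'rV[R]_d) (hrs : robust_statistic rs)
  (eta vs rho : R) (heta : 0 < eta) (hvs : 0 <= vs) (hrho : 0 < rho)
  (D' D'' : 'I_B -> 'I_T -> 'I_m -> Zt)
  (hD : forall i t, (i, t) <> (i1, t1) -> D' i t = D'' i t)
  (x0 : 'rV[R]_d) :
  rho_aligned rho (fun i => qgrad grad x0 (D' i t1))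
                  (fun i => qgrad grad x0 (D'' i t1)) ->
  linf (SGDsub_step grad Pi rs eta vs (fun i => D' i t1) x0
        - SGDsub_step grad Pi rs eta vs (fun i => D'' i t1) x0)
    <= eta * (4 * rho + 2 * vs).
Proof.
move=> [X' [Y' [hX hY]]].
set X := fun i => qgrad grad x0 (D' i t1) in hX *.
set Y := fun i => qgrad grad x0 (D'' i t1) in hY *.
have B_gt0 : (0 < B)%N by lia.
have rsX_X' := rs_in_aligned_ball hrs (ltW hrho) B_gt0 hX.
have rsY_Y' := rs_in_aligned_ball hrs (ltW hrho) B_gt0 hY.
rewrite -[B in (2 * B)%N]card_ord in hX hY.
have [|i ne_i1] := setI_witness_neq i1 _ hX hY; first by rewrite card_ord.
rewrite !inE => /andP[Xi_X' Yi_Y'].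
have D_i : D' i t1 = D'' i t1 by apply: hD => -[ii1]; rewrite ii1 eqxx in ne_i1.
have X'_Y' : linf (X' - Y') <= rho + rho.
  by rewrite /in_ballinf linf_distC D_i in Xi_X'; apply: linf_dist_triangle Xi_X' _.
have rsX_rsY : linf (rs X - rs Y) <= rho + (rho + rho) + rho.
  rewrite /in_ballinf linf_distC in rsY_Y'.
  exact: linf_dist_triangle (linf_dist_triangle rsX_X' X'_Y') rsY_Y'.
have est_gap : linf (RobustEst rs X vs - RobustEst rs Y vs) <= 4 * rho + 2 * vs.
  have estY := RobustEst_near_rs rs Y hvs; rewrite linf_distC in estY.
  have -> : 4 * rho + 2 * vs = vs + (rho + (rho + rho) + rho) + vs by ring.
  exact: linf_dist_triangle (linf_dist_triangle (RobustEst_near_rs rs X hvs) rsX_rsY) estY.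
exact/(proj_ballinf_nonexpansive hPi)/linf_dist_gradient_step/est_gap/ltW.
Qed.
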